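(* Let $R$ be a commutative ring, $n\ge1$, and $f\in(T_n(R))[x]$. Then $f(C)=0$ for all $C\in T_n(R)$ if and only if $f_{ij}\in N_R(T_{n-j+1}(R))$ for all $1\le i\le j\le n$. Also, $f(C)_\ell=0$ for all $C\in T_n(R)$ if and only if $f_{ij}\in N_R(T_i(R))$ for all $1\le i\le j\le n$. Equivalently, under the identification of $(T_n(R))[x]$ with $T_n(R[x])$ via $f\mapsto(f_{ij})$, the set $N_{T_n(R)}(T_n(R))$ of right null-polynomials is the set of upper triangular matrices whose $(i,j)$-entry ($i\le j$) lies in $N_R(T_{n-j+1}(R))$, and the set $N^{\ell}_{T_n(R)}(T_n(R))$ of left null-polynomials is the set of upper triangular matrices whose $(i,j)$-entry ($i\le j$) lies in $N_R(T_i(R))$.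
   Context: $T_n(A)$ denotes the ring of upper triangular $n\times n$ matrices over a ring $A$. For $f=\sum_k F_kx^k\in(T_n(R))[x]$ with $F_k\in T_n(R)$, right substitution is $f(C)=\sum_kF_kC^k$ and left substitution is $f(C)_\ell=\sum_kC^kF_k$. Writing $f_{ij}^{(k)}$ for the $(i,j)$-entry of $F_k$, set $f_{ij}=\sum_k f_{ij}^{(k)}x^k\in R[x]$; the map $f\mapsto(f_{ij})$ is a ring isomorphism $(T_n(R))[x]\to T_n(R[x])$. For $m\ge1$, $N_R(T_m(R))=\{g\in R[x]\mid \forall C\in T_m(R):\ g(C)=0\}$ (usual evaluation). $N_{T_n(R)}(T_n(R))=\{f\in(T_n(R))[x]\mid\forall C\in T_n(R):\ f(C)=0\}$ and $N^{\ell}_{T_n(R)}(T_n(R))=\{f\in(T_n(R))[x]\mid\forall C\in T_n(R):\ f(C)_\ell=0\}$. *)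

From HB Require Import structures.
From mathcomp Require Import all_boot all_order all_algebra.
Set Implicit Arguments. Unset Strict Implicit. Unset Printing Implicit Defensive.
Import GRing.Theory.
Local Open Scope ring_scope.

Definition upper_tri (R : nzRingType) (m : nat) (A : 'M[R]_m) : Prop :=
  forall i j : 'I_m, (j < i)%N -> A i j = 0.

Definition rsubst (R : nzRingType) (n : nat) (f : {poly 'M[R]_n.+1}) (C : 'M[R]_n.+1)
  : 'M[R]_n.+1 := \sum_(k < size f) f`_k * C ^+ k.

Definition lsubst (R : nzRingType) (n : nat) (f : {poly 'M[R]_n.+1}) (C : 'M[R]_n.+1)
  : 'M[R]_n.+1 := \sum_(k < size f) C ^+ k * f`_k.

Definition fentry (R : nzRingType) (n : nat) (f : {poly 'M[R]_n.+1}) (i j : 'I_n.+1)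
  : {poly R} := \poly_(k < size f) (f`_k i j).

(* g \in N_R(T_{m+1}(R)): g(C) = 0 (usual evaluation) for every upper triangular
   (m+1)x(m+1) matrix C over R. Indexed by m with size m.+1 (sizes are >= 1). *)
Definition nullR (R : comNzRingType) (m : nat) (g : {poly R}) : Prop :=
  forall C : 'M[R]_m.+1, upper_tri C -> horner_mx C g = 0.

From mathcomp Require Import all_boot all_order all_algebra.
From mathcomp Require Import zify.
Import GRing.Theory.
Set Implicit Arguments. Unset Strict Implicit.
Local Open Scope ring_scope.

(* Entry (i, m) of f(C) is \sum_l f_il(C)_lm.  For upper triangular C, the
   entries of g(C) in rows and columns p..p+c only depend on the principal block
   of C on those indices, so f_il(C)_lm = 0 as soon as f_il is null on
   T_(n-l+1)(R); this gives sufficiency.  Necessity goes by descending induction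
   on j: placing an arbitrary D in T_(n-j+1)(R) as the lower right block of C,
   row j of f(C) reduces to row 0 of f_ij(D), and since every entry of g(D) lies
   in row 0 of g applied to a shift of D, f_ij is null.  The left case reduces to
   the right one by transposition about the anti-diagonal, an anti-automorphism
   of T_n(R) which maps the index pair (i, j) to (n-j, n-i). *)

Section UpperTriangular.
Variable R : nzRingType.

Lemma upper_tri_mul m (A B : 'M[R]_m.+1) :
  upper_tri A -> upper_tri B -> upper_tri (A * B).
Proof.
move=> hA hB i j lt_ji; rewrite -mulmxE mxE big1 // => z _.
have [lt_zi|le_iz] := ltnP z i; first by rewrite hA // mul0r.
by rewrite hB ?mulr0 // (leq_trans lt_ji le_iz).
Qed.

Lemma upper_tri_exp m (A : 'M[R]_m.+1) k : upper_tri A -> upper_tri (A ^+ k).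
Proof.
move=> hA; elim: k => [|k IH]; last by rewrite exprS; apply: upper_tri_mul.
by move=> i j lt_ji; rewrite expr0 mxE -val_eqE /= gtn_eqF.
Qed.

Definition window_mx N p c (A : 'M[R]_N.+1) : 'M[R]_c.+1 :=
  \matrix_(x, y) A (inord (x + p)) (inord (y + p)).

Definition embed_mx N p c (D : 'M[R]_c.+1) : 'M[R]_N.+1 :=
  \matrix_(x, y) if (p <= x <= p + c)%N && (p <= y <= p + c)%N
                 then D (inord (x - p)) (inord (y - p)) else 0.

Variables (N p c : nat).
Hypothesis le_pc_N : (p + c <= N)%N.

Lemma upper_tri_window (A : 'M[R]_N.+1) : upper_tri A -> upper_tri (window_mx p c A).
Proof.
move=> hA x y lt_yx; rewrite mxE hA // !inordK; have := ltn_ord x; lia.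
Qed.

Lemma upper_tri_embed (D : 'M[R]_c.+1) : upper_tri D -> upper_tri (embed_mx N p D).
Proof.
move=> hD x y lt_yx; rewrite mxE; case: ifP => // /andP[hx hy].
by rewrite hD // !inordK; lia.
Qed.

Lemma window_embed (D : 'M[R]_c.+1) : window_mx p c (embed_mx N p D) = D.
Proof.
apply/matrixP => x y; have := ltn_ord x; have := ltn_ord y => hy hx.
by rewrite !mxE !inordK ?ifT ?addnK ?inord_val //; lia.
Qed.

Lemma window_mx1 : window_mx p c (1 : 'M[R]_N.+1) = 1.
Proof.
apply/matrixP => x y; rewrite !mxE -val_eqE /= !inordK ?eqn_add2r //;
  have := ltn_ord x; have := ltn_ord y; lia.
Qed.

Lemma window_mul (A B : 'M[R]_N.+1) : upper_tri A -> upper_tri B ->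
  window_mx p c (A * B) = window_mx p c A * window_mx p c B.
Proof.
move=> hA hB; apply/matrixP => x y; rewrite -!mulmxE !mxE.
have hx := ltn_ord x; have hy := ltn_ord y.
pose F z := A (inord (x + p)) (inord z) * B (inord z) (inord (y + p)).
(* Terms with z < p vanish in A and those with z > p + c vanish in B. *)
rewrite (eq_bigr (fun z : 'I_N.+1 => F z)) => [|z _]; last by rewrite /F inord_val.
rewrite -(big_mkord xpredT F) (big_cat_nat _ (n := p)) //=; last by lia.
rewrite big_nat_cond big1 ?add0r => [|z /andP[/andP[_ lt_zp] _]]; last first.
  by rewrite /F hA ?mul0r // !inordK; lia.
rewrite (big_cat_nat _ (n := p + c.+1)) //=; try lia.
rewrite [X in _ + X]big_nat_cond [X in _ + X]big1 ?addr0 => [|z /andP[/andP[hz hzN] _]]; last first.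
  by rewrite /F hB ?mulr0 // !inordK; lia.
rewrite -{1}[p]add0n big_addn addKn big_mkord; apply: eq_bigr => z _.
by rewrite /F !mxE.
Qed.

Lemma window_exp (A : 'M[R]_N.+1) k : upper_tri A ->
  window_mx p c (A ^+ k) = window_mx p c A ^+ k.
Proof.
move=> hA; elim: k => [|k IH]; first by rewrite !expr0 window_mx1.
by rewrite !exprSr window_mul ?IH //; apply: upper_tri_exp.
Qed.

End UpperTriangular.

Section HornerMx.
Variable R : comNzRingType.

Lemma horner_mx_poly_entry m (C : 'M[R]_m.+1) s (E : nat -> R) i j :
  horner_mx C (\poly_(k < s) E k) i j = \sum_(k < s) E k * (C ^+ k) i j.
Proof.
rewrite poly_def rmorph_sum summxE; apply: eq_bigr => k _.
rewrite -mul_polyC rmorphM /= rmorphXn /= horner_mx_C horner_mx_X.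
by rewrite -mulmxE mul_scalar_mx mxE.
Qed.

Lemma horner_mx_entry m (C : 'M[R]_m.+1) (g : {poly R}) i j :
  horner_mx C g i j = \sum_(k < size g) g`_k * (C ^+ k) i j.
Proof. by rewrite -{1}[g]coefK horner_mx_poly_entry. Qed.

Lemma upper_tri_horner_mx m (C : 'M[R]_m.+1) (g : {poly R}) :
  upper_tri C -> upper_tri (horner_mx C g).
Proof.
move=> hC i j lt_ji; rewrite horner_mx_entry big1 // => k _.
by rewrite (upper_tri_exp k hC) // mulr0.
Qed.

Lemma horner_mx_zero_row m (C : 'M[R]_m.+1) (g : {poly R}) l j :
  (forall y, C l y = 0) -> l != j -> horner_mx C g l j = 0.
Proof.
move=> Cl0 neq_lj; rewrite horner_mx_entry big1 // => -[[|k] _] _ /=.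
  by rewrite expr0 mxE (negbTE neq_lj) mulr0.
by rewrite exprS -mulmxE mxE big1 ?mulr0 // => z _; rewrite Cl0 mul0r.
Qed.

Section Window.
Variables (N p c : nat).
Hypothesis le_pc_N : (p + c <= N)%N.

Lemma horner_mx_window (A : 'M[R]_N.+1) (g : {poly R}) : upper_tri A ->
  window_mx p c (horner_mx A g) = horner_mx (window_mx p c A) g.
Proof.
move=> hA; apply/matrixP => x y; rewrite mxE !horner_mx_entry.
by apply: eq_bigr => k _; rewrite -window_exp // mxE.
Qed.

Lemma horner_mx_windowE (A : 'M[R]_N.+1) (g : {poly R}) x y :
  upper_tri A -> (x <= c)%N -> (y <= c)%N ->
  horner_mx A g (inord (x + p)) (inord (y + p)) =
  horner_mx (window_mx p c A) g (inord x) (inord y).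
Proof. by move=> hA hx hy; rewrite -horner_mx_window // mxE !inordK. Qed.

End Window.

Lemma nullR_horner_mx_row n (C : 'M[R]_n.+1) (g : {poly R}) (l m : 'I_n.+1) :
  upper_tri C -> nullR (n - l) g -> horner_mx C g l m = 0.
Proof.
move=> hC hg; have [lt_ml|le_lm] := ltnP m l; first exact: upper_tri_horner_mx.
have hl := ltn_ord l; have hm := ltn_ord m.
have le_ln : (l + (n - l) <= n)%N by lia.
have := horner_mx_windowE le_ln g hC (leq0n _) (leq_sub2r l (ltnSE hm)).
rewrite add0n subnK // !inord_val => ->.
by rewrite (hg _ (upper_tri_window le_ln hC)) mxE.
Qed.

Lemma nullR_of_row0 m (g : {poly R}) :
  (forall D : 'M[R]_m.+1, upper_tri D -> forall b, horner_mx D g ord0 b = 0) ->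
  nullR m g.
Proof.
(* Entry (a, b) of g(D) is entry (0, b - a) of g(E), E being D shifted up by a. *)
move=> row0 D hD; apply/matrixP => a b; rewrite mxE.
have [lt_ba|le_ab] := ltnP b a; first exact: upper_tri_horner_mx.
have ha := ltn_ord a; have hb := ltn_ord b.
have le_am : (a + (m - a) <= m)%N by lia.
have le_0m : (0 + (m - a) <= m)%N by lia.
pose W := window_mx a (m - a) D.
have hW : upper_tri (embed_mx m 0 W) by apply/upper_tri_embed/upper_tri_window.
have le_ba_ma := leq_sub2r a (ltnSE hb).
have := horner_mx_windowE le_am g hD (leq0n _) le_ba_ma.
rewrite add0n subnK // !inord_val => ->.
have := horner_mx_windowE le_0m g hW (leq0n _) le_ba_ma.
rewrite window_embed // => <-.
have -> : inord (0 + 0) = ord0 :> 'I_m.+1 by apply: val_inj; rewrite /= inordK.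
exact: row0.
Qed.

End HornerMx.

Section RightSubstitution.
Variables (R : comNzRingType) (n : nat) (f : {poly 'M[R]_n.+1}).
Hypothesis upper_tri_f : forall k, upper_tri f`_k.

Lemma rsubst_entry C i m :
  rsubst f C i m = \sum_(l < n.+1) horner_mx C (fentry f i l) l m.
Proof.
rewrite /rsubst summxE.
under eq_bigr => k _ do rewrite -mulmxE mxE.
by rewrite exchange_big; apply: eq_bigr => l _; rewrite horner_mx_poly_entry.
Qed.

Lemma fentry_lower (i l : 'I_n.+1) : (l < i)%N -> fentry f i l = 0.
Proof.
move=> lt_li; apply/polyP => k; rewrite coef_poly coef0.
by case: ifP => // _; rewrite upper_tri_f.
Qed.

Lemma rsubst_null_of_entries :
  (forall i j : 'I_n.+1, (i <= j)%N -> nullR (n - j) (fentry f i j)) ->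
  forall C, upper_tri C -> rsubst f C = 0.
Proof.
move=> null_f C hC; apply/matrixP => i m; rewrite rsubst_entry mxE big1 // => l _.
have [lt_li|le_il] := ltnP l i; first by rewrite fentry_lower // rmorph0 mxE.
exact: nullR_horner_mx_row hC (null_f _ _ le_il).
Qed.

Hypothesis rsubst_null : forall C, upper_tri C -> rsubst f C = 0.

Lemma nullR_fentry_column (j : 'I_n.+1) :
  (forall l : 'I_n.+1, (j < l)%N -> forall i : 'I_n.+1, (i <= l)%N ->
     nullR (n - l) (fentry f i l)) ->
  forall i : 'I_n.+1, (i <= j)%N -> nullR (n - j) (fentry f i j).
Proof.
move=> null_right i le_ij; apply: nullR_of_row0 => D hD b.
have hj := ltn_ord j; have hb := ltn_ord b.
have le_jn : (j + (n - j) <= n)%N by lia.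
pose C := embed_mx n j D; have hC : upper_tri C by apply: upper_tri_embed.
pose m : 'I_n.+1 := inord (b + j).
have := horner_mx_windowE le_jn (fentry f i j) hC (leq0n _) (ltnSE hb).
rewrite window_embed // add0n !inord_val.
have -> : inord 0 = ord0 :> 'I_(n - j).+1 by apply: val_inj; rewrite /= inordK.
(* In f(C)_im = \sum_l f_il(C)_lm, rows l < j of C vanish and f_il is null for l > j. *)
move=> <-; have /matrixP/(_ i m) := rsubst_null hC.
rewrite rsubst_entry mxE (bigD1 j) //= big1 ?addr0 // => l neq_lj.
have [lt_lj|lt_jl] := ltnP l j.
  apply: horner_mx_zero_row; first by move=> y; rewrite mxE; case: ifP => //; lia.
  by rewrite -val_eqE /= inordK; lia.
apply: nullR_horner_mx_row hC (null_right _ _ _ _); last by lia.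
by rewrite ltn_neqAle eq_sym neq_lj.
Qed.

End RightSubstitution.

Lemma rsubst_null_criterion (R : comNzRingType) n (f : {poly 'M[R]_n.+1}) :
  (forall k, upper_tri f`_k) ->
  (forall C, upper_tri C -> rsubst f C = 0) <->
  (forall i j : 'I_n.+1, (i <= j)%N -> nullR (n - j) (fentry f i j)).
Proof.
move=> hf; split=> [null_f|]; last exact: rsubst_null_of_entries.
suff null_col k (j : 'I_n.+1) : (n - j)%N = k ->
    forall i : 'I_n.+1, (i <= j)%N -> nullR (n - j) (fentry f i j).
  by move=> i j; apply: null_col.
elim/ltn_ind: k j => k IH j def_k; apply: nullR_fentry_column => // l lt_jl i le_il.
by apply: (IH (n - l)%N) => //; have := ltn_ord l; lia.
Qed.

Section Flip.
Variable R : comNzRingType.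

Definition flip_mx m (A : 'M[R]_m) : 'M[R]_m :=
  \matrix_(i, j) A (rev_ord j) (rev_ord i).

Variable m : nat.

Lemma flip_mxK : involutive (@flip_mx m).
Proof. by move=> A; apply/matrixP => i j; rewrite !mxE !rev_ordK. Qed.

Lemma flip_mx0 : flip_mx 0 = 0 :> 'M[R]_m.
Proof. by apply/matrixP => i j; rewrite !mxE. Qed.

Lemma flip_mx_sum I (r : seq I) (P : pred I) (F : I -> 'M[R]_m) :
  flip_mx (\sum_(k <- r | P k) F k) = \sum_(k <- r | P k) flip_mx (F k).
Proof.
by apply/matrixP => i j; rewrite mxE !summxE; apply: eq_bigr => k _; rewrite mxE.
Qed.

Lemma upper_tri_flip (A : 'M[R]_m) : upper_tri A -> upper_tri (flip_mx A).
Proof. by move=> hA i j lt_ji; rewrite mxE hA //=; have := ltn_ord i; lia. Qed.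

Lemma flip_mxM (A B : 'M[R]_m.+1) : flip_mx (A * B) = flip_mx B * flip_mx A.
Proof.
apply/matrixP => i j; rewrite -!mulmxE !mxE [RHS](reindex_inj rev_ord_inj).
by apply: eq_bigr => k _; rewrite !mxE rev_ordK mulrC.
Qed.

Lemma flip_mxX (A : 'M[R]_m.+1) k : flip_mx (A ^+ k) = flip_mx A ^+ k.
Proof.
elim: k => [|k IH]; last by rewrite exprS exprSr flip_mxM IH.
by apply/matrixP => i j; rewrite !expr0 !mxE (inj_eq rev_ord_inj) eq_sym.
Qed.

End Flip.

Section LeftSubstitution.
Variables (R : comNzRingType) (n : nat) (f : {poly 'M[R]_n.+1}).

Let flip_inj : injective (@flip_mx R n.+1) := can_inj (@flip_mxK R n.+1).

Lemma flip_lsubst C :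
  flip_mx (lsubst f C) = rsubst (map_poly (@flip_mx R n.+1) f) (flip_mx C).
Proof.
rewrite /rsubst size_map_inj_poly ?flip_mx0 // flip_mx_sum.
by apply: eq_bigr => k _; rewrite flip_mxM flip_mxX coef_map_id0 ?flip_mx0.
Qed.

Lemma fentry_flip i j :
  fentry (map_poly (@flip_mx R n.+1) f) i j = fentry f (rev_ord j) (rev_ord i).
Proof.
rewrite /fentry size_map_inj_poly ?flip_mx0 //.
by apply: eq_poly => k _; rewrite coef_map_id0 ?flip_mx0 // mxE.
Qed.

Lemma lsubst_null_criterion : (forall k, upper_tri f`_k) ->
  (forall C, upper_tri C -> lsubst f C = 0) <->
  (forall i j : 'I_n.+1, (i <= j)%N -> nullR i (fentry f i j)).
Proof.
move=> hf; set g := map_poly (@flip_mx R n.+1) f.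
have hg k : upper_tri g`_k by rewrite coef_map_id0 ?flip_mx0 //; apply: upper_tri_flip.
have rev_ord_le (i j : 'I_n.+1) : (i <= j)%N -> (rev_ord j <= rev_ord i)%N.
  by move=> le_ij /=; lia.
have n_rev_ord (i : 'I_n.+1) : (n - rev_ord i)%N = i by rewrite /=; have := ltn_ord i; lia.
apply: (@iff_trans _ (forall C, upper_tri C -> rsubst g C = 0)).
  split=> null_f C hC.
    by rewrite -[C]flip_mxK -flip_lsubst null_f ?flip_mx0 //; apply: upper_tri_flip.
  by apply: flip_inj; rewrite flip_lsubst null_f ?flip_mx0 //; apply: upper_tri_flip.
apply: iff_trans (rsubst_null_criterion hg) _; split=> null_f i j le_ij.
  by have := null_f _ _ (rev_ord_le _ _ le_ij); rewrite fentry_flip !rev_ordK n_rev_ord.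
by have := null_f _ _ (rev_ord_le _ _ le_ij); rewrite fentry_flip /= subSS.
Qed.

End LeftSubstitution.

Theorem corollary5p1 (R : comNzRingType) (n : nat) (f : {poly 'M[R]_n.+1})
    (hf : forall k : nat, upper_tri f`_k) :
  ((forall C : 'M[R]_n.+1, upper_tri C -> rsubst f C = 0) <->
     (forall i j : 'I_n.+1, (i <= j)%N -> nullR (n - j) (fentry f i j)))
  /\
  ((forall C : 'M[R]_n.+1, upper_tri C -> lsubst f C = 0) <->
     (forall i j : 'I_n.+1, (i <= j)%N -> nullR i (fentry f i j))).
Proof. by split; [apply: rsubst_null_criterion | apply: lsubst_null_criterion]. Qed.
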